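(* Let $\mathscr{a}\in\mathbb{R}$, $\mathscr{b}\in(\mathscr{a},\infty)$, $\rho\in(0,\infty)$, $\alpha,\beta\in\mathbb{R}$, for $\theta=(\theta_1,\theta_2,\theta_3,\theta_4)\in\mathbb{R}^4$ and $x\in\mathbb{R}$ let $\mathscr{N}^\theta(x)=\theta_3\max\{\theta_1x+\theta_2,0\}+\theta_4$ and $\mathcal{L}(\theta)=\rho\int_{\mathscr{a}}^{\mathscr{b}}(\mathscr{N}^\theta(y)-(\alpha y+\beta))^2\,\mathrm{d}y$, and let $\theta\in\mathbb{R}^4$ satisfy $\mathcal{L}(\theta)<\frac{\rho\alpha^2(\mathscr{b}-\mathscr{a})^3}{12}$. Then $\alpha\theta_1\theta_3>0$. *)

From Stdlib Require Import Reals.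
From Coquelicot Require Import Coquelicot.
Open Scope R_scope.

Definition Nnet (t1 t2 t3 t4 x : R) : R :=
  t3 * Rmax (t1 * x + t2) 0 + t4.

Definition Loss (a b rho alpha beta t1 t2 t3 t4 : R) : R :=
  rho * RInt (fun y => (Nnet t1 t2 t3 t4 y - (alpha * y + beta)) ^ 2) a b.

(* If [alpha * t1 * t3 <= 0], the network [Nnet] moves against the target line
   [y |-> alpha * y + beta]: around the midpoint [m] of [[a, b]], the increment
   [Nnet y - Nnet m] never has the sign of [alpha * (y - m)].  Expanding the square
   residual around [m] and dropping the resulting nonnegative terms bounds it
   below by a quadratic in [y - m] whose linear part integrates to zero over
   [[a, b]], so the loss is at least [rho * alpha^2 * (b - a)^3 / 12], the loss
   of the best constant fit. *)

From Stdlib Require Import Reals Lra Psatz.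
From Coquelicot Require Import Coquelicot.
Open Scope R_scope.

Lemma Rmax_0_half_abs (u : R) : Rmax u 0 = (u + Rabs u) / 2.
Proof. unfold Rmax, Rabs; destruct (Rle_dec u 0), (Rcase_abs u); lra. Qed.

Lemma Rmax_0_sub_mul_ge0 (u v : R) : 0 <= (Rmax u 0 - Rmax v 0) * (u - v).
Proof.
  unfold Rmax; destruct (Rle_dec u 0) as [Hu|Hu], (Rle_dec v 0) as [Hv|Hv];
    try apply Rnot_le_lt in Hu; try apply Rnot_le_lt in Hv;
    first [apply Rle_0_sqr | nra].
Qed.

Lemma continuous_affine (c d x : R) : continuous (fun y => c * y + d) x.
Proof.
  apply (continuous_plus (fun y => c * y) (fun _ => d)); [|apply continuous_const].
  apply (continuous_mult (fun _ => c) (fun y => y));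
    [apply continuous_const | apply continuous_id].
Qed.

Lemma continuous_Nnet (t1 t2 t3 t4 x : R) : continuous (Nnet t1 t2 t3 t4) x.
Proof.
  apply continuous_ext with
    (f := fun y => t3 * ((t1 * y + t2 + Rabs (t1 * y + t2)) * / 2) + t4).
  { intros y; unfold Nnet; rewrite Rmax_0_half_abs; reflexivity. }
  apply (continuous_plus _ (fun _ => t4)); [|apply continuous_const].
  apply (continuous_mult (fun _ => t3)); [apply continuous_const|].
  apply (continuous_mult _ (fun _ => / 2)); [|apply continuous_const].
  apply (continuous_plus (fun y => t1 * y + t2)); [apply continuous_affine|].
  apply continuous_Rabs_comp, continuous_affine.
Qed.

Lemma ex_RInt_Nnet_residual_sq (a b t1 t2 t3 t4 alpha beta : R) :
  ex_RInt (fun y => (Nnet t1 t2 t3 t4 y - (alpha * y + beta)) ^ 2) a b.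
Proof.
  apply (@ex_RInt_continuous R_CompleteNormedModule); intros x _.
  assert (Hres : continuous (fun y => Nnet t1 t2 t3 t4 y - (alpha * y + beta)) x).
  { apply (continuous_minus (Nnet t1 t2 t3 t4));
      [apply continuous_Nnet | apply continuous_affine]. }
  apply continuous_ext with
    (f := fun y => (Nnet t1 t2 t3 t4 y - (alpha * y + beta))
                   * (Nnet t1 t2 t3 t4 y - (alpha * y + beta))).
  { intros y; simpl; ring. }
  apply (continuous_mult (fun y => Nnet t1 t2 t3 t4 y - (alpha * y + beta))); exact Hres.
Qed.

Lemma Nnet_increment_sign (t1 t2 t3 t4 alpha m y : R) :
  alpha * t1 * t3 <= 0 ->
  alpha * (y - m) * (Nnet t1 t2 t3 t4 y - Nnet t1 t2 t3 t4 m) <= 0.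
Proof.
  intros Hsign.
  set (D := Rmax (t1 * y + t2) 0 - Rmax (t1 * m + t2) 0).
  assert (Hinc : Nnet t1 t2 t3 t4 y - Nnet t1 t2 t3 t4 m = t3 * D)
    by (unfold Nnet, D; ring).
  assert (Hmono : 0 <= D * (t1 * (y - m))).
  { replace (t1 * (y - m)) with ((t1 * y + t2) - (t1 * m + t2)) by ring.
    apply Rmax_0_sub_mul_ge0. }
  rewrite Hinc.
  destruct (Req_dec t1 0) as [Ht1|Ht1].
  - unfold D; subst t1; rewrite !Rmult_0_l, Rminus_diag; lra.
  - (* multiply through by [t1^2 > 0] to bring out [alpha * t1 * t3] *)
    assert (Ht1sq : 0 < t1 * t1) by nra.
    assert (alpha * (y - m) * (t3 * D) * (t1 * t1)
            = (alpha * t1 * t3) * (D * (t1 * (y - m)))) by ring.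
    nra.
Qed.

Lemma Nnet_residual_sq_ge (t1 t2 t3 t4 alpha beta m y : R) :
  alpha * t1 * t3 <= 0 ->
  let K := Nnet t1 t2 t3 t4 m - (alpha * m + beta) in
  alpha ^ 2 * (y - m) ^ 2 - 2 * K * alpha * (y - m)
  <= (Nnet t1 t2 t3 t4 y - (alpha * y + beta)) ^ 2.
Proof.
  intros Hsign K.
  pose proof (Nnet_increment_sign t1 t2 t3 t4 alpha m y Hsign) as Hinc.
  set (d := Nnet t1 t2 t3 t4 y - Nnet t1 t2 t3 t4 m) in Hinc.
  replace (Nnet t1 t2 t3 t4 y - (alpha * y + beta))
    with (K + d - alpha * (y - m)) by (unfold K, d; ring).
  pose proof (pow2_ge_0 (K + d)).
  clearbody K d; nra.
Qed.

Lemma RInt_midpoint_quadratic (a b c d : R) :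
  RInt (fun y => c * (y - (a + b) / 2) ^ 2 + d * (y - (a + b) / 2)) a b
  = c * (b - a) ^ 3 / 12.
Proof.
  set (m := (a + b) / 2).
  set (F := fun y => c * (y - m) ^ 3 / 3 + d * (y - m) ^ 2 / 2).
  assert (HF : is_RInt (fun y => c * (y - m) ^ 2 + d * (y - m)) a b
                 (minus (F b) (F a))).
  { apply (@is_RInt_derive R_CompleteNormedModule).
    - intros x _; unfold F; auto_derive; [exact I | field].
    - intros x _; apply (@ex_derive_continuous R_AbsRing R_NormedModule).
      auto_derive; exact I. }
  rewrite (is_RInt_unique _ _ _ _ HF).
  unfold minus, plus, opp, F, m; simpl; field.
Qed.

Lemma Loss_ge_of_sign_nonpos (a b rho alpha beta t1 t2 t3 t4 : R) :
  a <= b -> 0 <= rho -> alpha * t1 * t3 <= 0 ->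
  rho * alpha ^ 2 * (b - a) ^ 3 / 12 <= Loss a b rho alpha beta t1 t2 t3 t4.
Proof.
  intros Hab Hrho Hsign.
  set (m := (a + b) / 2).
  set (K := Nnet t1 t2 t3 t4 m - (alpha * m + beta)).
  assert (Hint : alpha ^ 2 * (b - a) ^ 3 / 12
    <= RInt (fun y => (Nnet t1 t2 t3 t4 y - (alpha * y + beta)) ^ 2) a b).
  { rewrite <- (RInt_midpoint_quadratic a b (alpha ^ 2) (- (2 * K * alpha))).
    apply RInt_le; [exact Hab | | apply ex_RInt_Nnet_residual_sq |].
    - apply (@ex_RInt_continuous R_CompleteNormedModule); intros x _.
      apply (@ex_derive_continuous R_AbsRing R_NormedModule); auto_derive; exact I.
    - intros y _.
      pose proof (Nnet_residual_sq_ge t1 t2 t3 t4 alpha beta m y Hsign) as Hy.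
      fold m K in Hy |- *; lra. }
  unfold Loss.
  replace (rho * alpha ^ 2 * (b - a) ^ 3 / 12)
    with (rho * (alpha ^ 2 * (b - a) ^ 3 / 12)) by field.
  apply Rmult_le_compat_l; assumption.
Qed.

Theorem corollary5p6 (a b rho alpha beta t1 t2 t3 t4 : R)
  (hab : a < b) (hrho : 0 < rho)
  (hL : Loss a b rho alpha beta t1 t2 t3 t4 < rho * alpha ^ 2 * (b - a) ^ 3 / 12) :
  alpha * t1 * t3 > 0.
Proof.
  destruct (Rle_or_lt (alpha * t1 * t3) 0) as [Hsign|Hpos]; [|exact Hpos].
  pose proof (Loss_ge_of_sign_nonpos a b rho alpha beta t1 t2 t3 t4
                (Rlt_le _ _ hab) (Rlt_le _ _ hrho) Hsign).
  lra.
Qed.
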